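(* For every $N\ge 5$, \[ \rho(\mathrm{Cir}^4_N,\mathrm{Cir}^2_N)\le \frac{18}{53}, \] where $\mathrm{Cir}^4_N$ is the graph on vertices $1,\dots,N$ arranged in a cycle with each vertex adjacent to the 2 nearest vertices in each cyclic direction, and $\mathrm{Cir}^2_N$ is the cycle graph on the same vertices in the same cyclic order.
   Context: Moran Birth-death process on two graphs (neutral case): $G^A$ and $G^B$ are connected undirected simple graphs on the same vertex set $\{1,\dots,N\}$. Every vertex is occupied by exactly one individual, of type $A$ (mutant) or type $B$ (resident). In each discrete time step, one individual is chosen uniformly at random among all $N$ individuals to reproduce; its offspring (of the same type) replaces the individual at a vertex chosen uniformly at random among the neighbors of the parent's vertex, where neighbors are taken in $G^A$ if the parent is of type $A$ and in $G^B$ if the parent is of type $B$. The all-$A$ and all-$B$ states are absorbing. The fixation probability $\rho(G^A,G^B)$ is the probability that the process reaches the all-$A$ state when started from exactly one type-$A$ individual at a uniformly random vertex, all other vertices of type $B$. *)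

From HB Require Import structures.
From mathcomp Require Import all_boot all_order all_algebra.
From mathcomp Require Import all_classical all_reals all_analysis.
From mathcomp Require Import Rstruct Rstruct_topology.
Set Implicit Arguments. Unset Strict Implicit. Unset Printing Implicit Defensive.
Import Order.TTheory GRing.Theory Num.Theory.
Local Open Scope ring_scope.

(* Graphs on vertex set 'I_N (vertex k stands for the paper's vertex k+1),
   given as adjacency relations (symmetric, irreflexive). *)

Definition cdist (N : nat) (i j : 'I_N) : nat :=
  minn ((j + N - i) %% N)%N ((i + N - j) %% N)%N.

Definition circ (d N : nat) : rel 'I_N :=
  fun i j => (i != j) && (cdist i j <= d)%N.

Definition CirN4 (N : nat) : rel 'I_N := @circ 2 N.
Definition CirN2 (N : nat) : rel 'I_N := @circ 1 N.

Definition nbr (N : nat) (G : rel 'I_N) (u : 'I_N) : {set 'I_N} :=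
  [set v | G u v].

(* A state is the set S of vertices occupied by type A (mutants).
   Birth-death step: reproducer u chosen uniformly (prob 1/N); its offspring
   replaces a uniformly chosen neighbour v of u, neighbours taken in GA if
   u is of type A (u \in S) and in GB otherwise. *)
Definition step (N : nat) (S : {set 'I_N}) (u v : 'I_N) : {set 'I_N} :=
  if u \in S then v |: S else S :\ v.

Definition graph_of (N : nat) (GA GB : rel 'I_N) (S : {set 'I_N}) (u : 'I_N)
  : rel 'I_N := if u \in S then GA else GB.

(* hit N GA GB n S = probability that the process started at state S
   reaches the all-A state within n steps. *)
Fixpoint hit (N : nat) (GA GB : rel 'I_N) (n : nat) (S : {set 'I_N}) : Rdefinitions.R :=
  match n with
  | 0%N => if S == [set: 'I_N] then 1 else 0
  | n'.+1 =>
    if S == [set: 'I_N] then 1 else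
    \sum_(u : 'I_N)
      \sum_(v in nbr (graph_of GA GB S u) u)
        (N%:R^-1 * (#|nbr (graph_of GA GB S u) u|%:R)^-1)
          * hit GA GB n' (step S u v)
  end.

Definition fixprob (N : nat) (GA GB : rel 'I_N) : Rdefinitions.R :=
  limn (fun n => N%:R^-1 * \sum_(v : 'I_N) hit GA GB n [set v]).

(* A bounded superharmonic potential dominates the absorption
   probability. Take V S = 1 when the mutant set S has at least three vertices
   or is a pair at distance >= 3, and V S = 0, 18/53, 39/53, 33/53 when S is
   empty, a single vertex, two adjacent vertices, or two vertices at distance 2.
   On each of these small states the expected change of V in one step of the
   process vanishes, and it is <= 0 wherever V S = 1, because V <= 1. Hence by
   induction the probability of reaching the all-A state within k steps is at
   most V S, and so the fixation probability from a single mutant is at most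
   18/53. *)

From HB Require Import structures.
From mathcomp Require Import all_boot all_order all_algebra.
From mathcomp Require Import all_classical all_reals all_analysis.
From mathcomp Require Import Rstruct Rstruct_topology.
From mathcomp Require Import ring lra zify.
Set Implicit Arguments. Unset Strict Implicit.
Import Order.TTheory GRing.Theory Num.Theory.
Local Open Scope ring_scope.

Local Notation R := Rdefinitions.R.

Lemma setU1_id (T : finType) (A : {set T}) (x : T) : x \in A -> x |: A = A.
Proof. by move=> xA; apply/finset.setUidPr; rewrite finset.sub1set. Qed.

Lemma setD1_id (T : finType) (A : {set T}) (x : T) : x \notin A -> A :\ x = A.
Proof. by move=> xA; apply/finset.setDidPl; rewrite disjoint_sym disjoints1. Qed.

Lemma setD1_pairl (T : finType) (x y v : T) : x != y -> v = x -> [set x; y] :\ v = [set y].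
Proof. by move=> xy ->; rewrite finset.setU1K // inE. Qed.

Lemma setD1_pairr (T : finType) (x y v : T) : x != y -> v = y -> [set x; y] :\ v = [set x].
Proof. by rewrite eq_sym finset.setUC; apply: setD1_pairl. Qed.

Section Superharmonic.
Variables (N : nat) (GA GB : rel 'I_N).
Implicit Types (S : {set 'I_N}) (f g : {set 'I_N} -> R).

Definition step_weight S (u : 'I_N) : R :=
  N%:R^-1 * (#|nbr (graph_of GA GB S u) u|%:R)^-1.

Definition mean_step f S : R :=
  \sum_(u : 'I_N) \sum_(v in nbr (graph_of GA GB S u) u)
    step_weight S u * f (step S u v).

Definition drift f S (u : 'I_N) : R :=
  \sum_(v in nbr (graph_of GA GB S u) u) step_weight S u * (f (step S u v) - f S).

Lemma hitS k S :
  hit GA GB k.+1 S = if S == [set: 'I_N] then 1 else mean_step (hit GA GB k) S.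
Proof. by []. Qed.

Lemma step_weight_ge0 S u : 0 <= step_weight S u.
Proof. by rewrite mulr_ge0 // invr_ge0 ler0n. Qed.

Lemma ler_mean_step f g S :
  (forall S', f S' <= g S') -> mean_step f S <= mean_step g S.
Proof.
move=> le_fg; apply: ler_sum => u _; apply: ler_sum => v _.
by rewrite ler_wpM2l ?step_weight_ge0.
Qed.

Lemma mean_step_ge0 f S : (forall S', 0 <= f S') -> 0 <= mean_step f S.
Proof.
move=> f_ge0; apply: sumr_ge0 => u _; apply: sumr_ge0 => v _.
exact: mulr_ge0 (step_weight_ge0 S u) (f_ge0 _).
Qed.

Lemma hit_ge0 k S : 0 <= hit GA GB k S.
Proof.
elim: k S => [|k IHk] S /=; first by case: ifP.
by case: ifP => // _; apply: mean_step_ge0.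
Qed.

Lemma hit_nondecreasing k S : hit GA GB k S <= hit GA GB k.+1 S.
Proof.
elim: k S => [|k IHk] S; rewrite hitS.
  rewrite [hit _ _ 0 S]/=; case: ifP => // _.
  by apply: mean_step_ge0 => S'; apply: hit_ge0.
by rewrite hitS; case: ifP => // _; apply: ler_mean_step.
Qed.

Hypothesis N_gt0 : (0 < N)%N.
Hypothesis card_nbrA_gt0 : forall u, (0 < #|nbr GA u|)%N.
Hypothesis card_nbrB_gt0 : forall u, (0 < #|nbr GB u|)%N.

Lemma mean_stepE f S : mean_step f S = f S + \sum_u drift f S u.
Proof.
have N_neq0 : N%:R != 0 :> R by rewrite pnatr_eq0 -lt0n.
have drift_u u : drift f S u =
    \sum_(v in nbr (graph_of GA GB S u) u) step_weight S u * f (step S u v)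
    - N%:R^-1 * f S.
  have nbr_gt0 : (0 < #|nbr (graph_of GA GB S u) u|)%N.
    by rewrite /graph_of; case: ifP.
  rewrite /drift; under eq_bigr do rewrite mulrBr.
  rewrite sumrB -mulr_suml sumr_const; congr (_ - _ * _).
  by rewrite /step_weight -mulrnAr -(mulr_natr _^-1) mulVf ?mulr1 // pnatr_eq0 -lt0n.
rewrite (eq_bigr _ (fun u _ => drift_u u)) sumrB -mulr_suml sumr_const card_ord.
by rewrite -(mulr_natr N%:R^-1) mulVf // mul1r addrC subrK.
Qed.

Lemma drift_le0_of_max f S u : (forall S', f S' <= f S) -> drift f S u <= 0.
Proof.
move=> f_max; apply: sumr_le0 => v _.
by rewrite mulr_ge0_le0 ?step_weight_ge0 // subr_le0.
Qed.

Variable f : {set 'I_N} -> R.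
Hypothesis f_ge0 : forall S, 0 <= f S.
Hypothesis f_full : f [set: 'I_N] = 1.
Hypothesis f_superharmonic :
  forall S, S != [set: 'I_N] -> \sum_u drift f S u <= 0.

Lemma hit_le_superharmonic k S : hit GA GB k S <= f S.
Proof.
elim: k S => [|k IHk] S.
  by rewrite /=; case: ifP => [/eqP -> | _]; rewrite ?f_full.
rewrite hitS; case: ifP => [/eqP -> | S_nfull]; first by rewrite f_full.
apply: le_trans (ler_mean_step S IHk) _.
by rewrite mean_stepE gerDl f_superharmonic ?S_nfull.
Qed.

Lemma fixprob_le_superharmonic c :
  (forall v, f [set v] <= c) -> fixprob GA GB <= c.
Proof.
move=> f1_le; rewrite /fixprob.
set p := fun k => N%:R^-1 * \sum_v hit GA GB k [set v].
have p_le k : p k <= c.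
  have avg_c : N%:R^-1 * \sum_(v : 'I_N) c = c.
    by rewrite sumr_const card_ord -(mulr_natr c) mulrC mulfK // pnatr_eq0 -lt0n.
  rewrite /p -[leRHS]avg_c ler_wpM2l ?invr_ge0 ?ler0n //.
  by apply: ler_sum => v _; apply: le_trans (hit_le_superharmonic _ _) (f1_le v).
have p_mono : {homo p : i j / (i <= j)%N >-> i <= j}.
  apply/nondecreasing_seqP => k; rewrite ler_wpM2l ?invr_ge0 ?ler0n //.
  by apply: ler_sum => v _; apply: hit_nondecreasing.
apply: limr_le; last exact: nearW.
by apply: nondecreasing_is_cvgn => //; exists c => _ [k _ <-].
Qed.

End Superharmonic.

(* For N = n + 5 the ordinal type 'I_N is the ring Z/NZ, so the cyclic order of
   the circulant graphs is u |-> u + 1. *)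
Section Circulant.
Variable n : nat.
Local Notation N := n.+4.+1.
Local Notation G4 := (@CirN4 N).
Local Notation G2 := (@CirN2 N).
Implicit Types (a u v x y z : 'I_N) (S : {set 'I_N}) (f : {set 'I_N} -> R).

Lemma val_sub x y : val (x - y) = ((x + N - y) %% N)%N.
Proof. by rewrite /= modnDmr addnBA // ltnW. Qed.

Lemma circE d x y :
  circ d x y = (y - x != 0) && (minn (val (y - x)%R) (val (- (y - x))%R) <= d)%N.
Proof.
rewrite /circ /cdist opprB -!val_sub subr_eq0; congr (_ && _).
by rewrite eq_sym.
Qed.

Lemma circ1_offset (k : 'I_N) :
  (k != 0) && (minn (val k) (val (- k)%R) <= 1)%N = (k == 1) || (k == -1).
Proof.
rewrite -!val_eqE /=; move: (ltn_ord k); case: (nat_of_ord k) => [|m] hm /=;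
  (rewrite !modn_small; try lia); apply/idP/idP; lia.
Qed.

Lemma circ2_offset (k : 'I_N) :
  (k != 0) && (minn (val k) (val (- k)%R) <= 2)%N = [|| k == 1, k == -1, k == 2 | k == -2].
Proof.
rewrite -!val_eqE /=; move: (ltn_ord k); case: (nat_of_ord k) => [|m] hm /=;
  (rewrite !modn_small; try lia); apply/idP/idP; lia.
Qed.

Lemma nbr_CirN2 u : nbr G2 u = [set u + 1; u - 1].
Proof.
by apply/setP => v; rewrite !inE /CirN2 circE circ1_offset !subr_eq ![_ + u]addrC.
Qed.

Lemma nbr_CirN4 u : nbr G4 u = [set u + 1; u - 1; u + 2; u - 2].
Proof.
apply/setP => v; rewrite !inE /CirN4 circE circ2_offset !subr_eq ![_ + u]addrC.
by rewrite !orbA.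
Qed.

Lemma neq_of_sub_nat x y (k : nat) : (0 < k < N)%N -> x - y = k%:R -> x != y.
Proof.
move=> k_range e; apply/eqP => exy; move: e; rewrite exy subrr => /(congr1 val).
by rewrite /= Zp_nat /= modn_small; lia.
Qed.

(* Offsets 1..4 are nonzero in Z/NZ because N >= 5. *)
Ltac vertex_neq_by k :=
  solve [ apply: (@neq_of_sub_nat _ _ k); [by [] | ring]
        | rewrite eq_sym; apply: (@neq_of_sub_nat _ _ k); [by [] | ring] ].
Ltac vertex_neq :=
  first [vertex_neq_by 1%N | vertex_neq_by 2%N | vertex_neq_by 3%N | vertex_neq_by 4%N].

Lemma uniq_nbr_CirN2 u : uniq [:: u + 1; u - 1].
Proof. by rewrite /= inE andbT; vertex_neq. Qed.

Lemma uniq_nbr_CirN4 u : uniq [:: u + 1; u - 1; u + 2; u - 2].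
Proof.
by rewrite /= !inE !negb_or -!andbA andbT; repeat (apply/andP; split); vertex_neq.
Qed.

Lemma sum_uniq_set (s : seq 'I_N) (A : {set 'I_N}) (F : 'I_N -> R) :
  uniq s -> A =i s -> \sum_(v in A) F v = \sum_(v <- s) F v.
Proof. by move=> s_uniq eqA; rewrite big_uniq //; apply: eq_bigl. Qed.

Lemma sum_nbr_CirN2 (F : 'I_N -> R) u :
  \sum_(v in nbr G2 u) F v = F (u + 1) + F (u - 1).
Proof.
rewrite (@sum_uniq_set _ _ F (uniq_nbr_CirN2 u)) => [|v].
  by rewrite !big_cons big_nil addr0.
by rewrite nbr_CirN2 !inE.
Qed.

Lemma sum_nbr_CirN4 (F : 'I_N -> R) u :
  \sum_(v in nbr G4 u) F v = F (u + 1) + F (u - 1) + F (u + 2) + F (u - 2).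
Proof.
rewrite (@sum_uniq_set _ _ F (uniq_nbr_CirN4 u)) => [|v].
  by rewrite !big_cons big_nil addr0 !addrA.
by rewrite nbr_CirN4 !inE !orbA.
Qed.

Lemma card_nbr_CirN2 u : #|nbr G2 u| = 2%N.
Proof.
apply: etrans (card_uniqP (uniq_nbr_CirN2 u)); apply: eq_card => v.
by rewrite nbr_CirN2 !inE.
Qed.

Lemma card_nbr_CirN4 u : #|nbr G4 u| = 4%N.
Proof.
apply: etrans (card_uniqP (uniq_nbr_CirN4 u)); apply: eq_card => v.
by rewrite nbr_CirN4 !inE !orbA.
Qed.

Lemma drift_mutant f S u : u \in S ->
  drift G4 G2 f S u = N%:R^-1 * 4^-1 *
    ((f (u + 1 |: S) - f S) + (f (u - 1 |: S) - f S)
     + (f (u + 2 |: S) - f S) + (f (u - 2 |: S) - f S)).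
Proof.
move=> uS; rewrite /drift /step_weight /step /graph_of uS card_nbr_CirN4.
by rewrite sum_nbr_CirN4; ring.
Qed.

Lemma drift_resident f S u : u \notin S ->
  drift G4 G2 f S u = N%:R^-1 * 2^-1 *
    ((f (S :\ (u + 1)) - f S) + (f (S :\ (u - 1)) - f S)).
Proof.
move=> uS; rewrite /drift /step_weight /step /graph_of (negbTE uS) card_nbr_CirN2.
by rewrite sum_nbr_CirN2; ring.
Qed.

Lemma sum_drift_support f S (B : seq 'I_N) : uniq B ->
    (forall u, u \notin B -> [&& u \notin S, u + 1 \notin S & u - 1 \notin S]) ->
  \sum_u drift G4 G2 f S u = \sum_(u <- B) drift G4 G2 f S u.
Proof.
move=> B_uniq B_supp; rewrite (bigID (mem B)) /= [X in _ + X]big1 ?addr0.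
  by rewrite big_uniq.
move=> u /B_supp /and3P[uS u1S u2S].
by rewrite drift_resident // !setD1_id // !subrr addr0 mulr0.
Qed.

(* The unique values making the drift of [potential] vanish on singletons,
   adjacent pairs and pairs at distance 2 (a 3 x 3 linear system). *)
Definition rho_1 : R := 18%:R / 53%:R.
Definition rho_adj : R := 39%:R / 53%:R.
Definition rho_gap : R := 33%:R / 53%:R.

Definition potential S : R :=
  if (3 <= #|S|)%N then 1
  else if #|S| == 0%N then 0
  else if #|S| == 1%N then rho_1
  else if [exists b, S == [set b; b + 1]] then rho_adj
  else if [exists b, S == [set b; b + 2]] then rho_gap
  else 1.

Lemma potential_ge0 S : 0 <= potential S.
Proof. by rewrite /potential /rho_1 /rho_adj /rho_gap; repeat case: ifP => _; lra. Qed.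

Lemma potential_le1 S : potential S <= 1.
Proof. by rewrite /potential /rho_1 /rho_adj /rho_gap; repeat case: ifP => _; lra. Qed.

Lemma potential_setT : potential [set: 'I_N] = 1.
Proof. by rewrite /potential cardsT card_ord. Qed.

Lemma potential_set0 : potential finset.set0 = 0.
Proof. by rewrite /potential cards0. Qed.

Lemma potential_set1 a : potential [set a] = rho_1.
Proof. by rewrite /potential cards1. Qed.

Lemma potential_triple x y z :
  x != y -> x != z -> y != z -> potential (x |: [set y; z]) = 1.
Proof.
by move=> xy xz yz; rewrite /potential cardsU1 cards2 yz !inE negb_or xy xz.
Qed.

Lemma potential_adj x y : (y == x + 1) || (x == y + 1) -> potential [set x; y] = rho_adj.
Proof.
have adj b : potential [set b; b + 1] = rho_adj.
  rewrite /potential cards2 (_ : b != b + 1) /=; last by vertex_neq.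
  by case: existsP => // -[]; exists b.
by case/orP => /eqP->; rewrite ?adj // finset.setUC adj.
Qed.

Lemma potential_gap x y : (y == x + 2) || (x == y + 2) -> potential [set x; y] = rho_gap.
Proof.
have gap b : potential [set b; b + 2] = rho_gap.
  rewrite /potential cards2 (_ : b != b + 2) /=; last by vertex_neq.
  case: existsP => [[c /eqP bE]|_]; last by case: existsP => // -[]; exists b.
  have : b + 2 \in [set c; c + 1] by rewrite -bE set22.
  have : b \in [set c; c + 1] by rewrite -bE set21.
  by rewrite !inE => /orP[] /eqP-> /orP[]; apply: contraTeq => _; vertex_neq.
by case/orP => /eqP->; rewrite ?gap // finset.setUC gap.
Qed.

Ltac neq_from_hyps :=
  match goal with
  | h : is_true (?u != _) |- is_true (?u + ?c != _) =>
      move: h; apply: contra_neq => /(congr1 (fun w => w - c));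
      rewrite addrK => ->; ring
  | h : is_true (?u != _) |- is_true (?u != _) =>
      move: h; apply: contra_neq => ->; ring
  end.

Ltac uniq_vertices :=
  rewrite /= !inE ?negb_or -?andbA ?andbT; repeat (apply/andP; split); vertex_neq.

Ltac outside_support :=
  let u := fresh "u" in let h := fresh "h" in
  move=> u h; rewrite !inE ?orbF in h;
  repeat (let h' := fresh "h" in case/norP: h => h' h);
  rewrite !inE ?negb_or; repeat (apply/andP; split); neq_from_hyps.

Ltac pair_offset :=
  solve [apply/orP; left; apply/eqP; ring | apply/orP; right; apply/eqP; ring].

Ltac not_in_vertices :=
  rewrite !inE ?negb_or; repeat (apply/andP; split); vertex_neq.

Lemma sum_drift_potential_set1 a : \sum_u drift G4 G2 potential [set a] u = 0.
Proof.
rewrite (@sum_drift_support _ _ [:: a; a + 1; a - 1]); [|uniq_vertices|outside_support].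
rewrite !big_cons big_nil addr0 drift_mutant ?set11 // !drift_resident;
  try solve [not_in_vertices].
rewrite addrK subrK finset.setDv potential_set0 !setD1_id; try solve [not_in_vertices].
rewrite potential_set1 (@potential_adj (a + 1) a) ?(@potential_adj (a - 1) a);
  rewrite ?(@potential_gap (a + 2) a) ?(@potential_gap (a - 2) a); try pair_offset.
by rewrite /rho_1 /rho_adj /rho_gap; set x := N%:R^-1; lra.
Qed.

Lemma sum_drift_potential_adj a : \sum_u drift G4 G2 potential [set a; a + 1] u = 0.
Proof.
rewrite (@sum_drift_support _ _ [:: a; a + 1; a - 1; a + 2]); [|uniq_vertices|outside_support].
rewrite !big_cons big_nil addr0 (@drift_mutant _ _ a) ?set21 //.
rewrite (@drift_mutant _ _ (a + 1)) ?set22 // !drift_resident; try solve [not_in_vertices].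
rewrite !addrK !subrK (@setU1_id _ [set a; a + 1] a) ?(@setU1_id _ [set a; a + 1] (a + 1));
  rewrite ?set21 ?set22 //.
rewrite (@setD1_pairl _ a (a + 1) a) ?(@setD1_pairr _ a (a + 1) (a + 2 - 1));
  try solve [vertex_neq | ring].
rewrite !setD1_id ?subrr; try solve [not_in_vertices].
rewrite !potential_triple; try solve [vertex_neq].
rewrite !potential_set1 (@potential_adj a (a + 1)); last pair_offset.
by rewrite /rho_1 /rho_adj /rho_gap; set x := N%:R^-1; lra.
Qed.

Lemma sum_drift_potential_gap a : \sum_u drift G4 G2 potential [set a; a + 2] u = 0.
Proof.
rewrite (@sum_drift_support _ _ [:: a; a + 2; a + 1; a - 1; a + 3]);
  [|uniq_vertices|outside_support].
rewrite !big_cons big_nil addr0 (@drift_mutant _ _ a) ?set21 //.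
rewrite (@drift_mutant _ _ (a + 2)) ?set22 // !drift_resident; try solve [not_in_vertices].
rewrite !addrK !subrK (@setU1_id _ [set a; a + 2] a) ?(@setU1_id _ [set a; a + 2] (a + 2));
  rewrite ?set21 ?set22 //.
rewrite !(@setD1_pairl _ a (a + 2) a) ?(@setD1_pairr _ a (a + 2) (a + 1 + 1));
  rewrite ?(@setD1_pairr _ a (a + 2) (a + 3 - 1)); try solve [vertex_neq | ring].
rewrite !setD1_id ?subrr; try solve [not_in_vertices].
rewrite !potential_triple; try solve [vertex_neq].
rewrite !potential_set1 (@potential_gap a (a + 2)); last pair_offset.
by rewrite /rho_1 /rho_adj /rho_gap; set x := N%:R^-1; lra.
Qed.

Lemma sum_drift_potential_le0 S : \sum_u drift G4 G2 potential S u <= 0.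
Proof.
have [S_max | ] := eqVneq (potential S) 1.
  apply: sumr_le0 => u _; apply: drift_le0_of_max => S'.
  by rewrite S_max potential_le1.
rewrite {1}/potential; case: ifP => _; first by rewrite eqxx.
case: ifP => [/eqP/cards0_eq -> _ | _].
  by rewrite (@sum_drift_support _ _ [::]) ?big_nil // => u _; rewrite !inE.
case: ifP => [/cards1P[a ->] _ | _]; first by rewrite sum_drift_potential_set1.
case: ifP => [/existsP[a /eqP ->] _ | _]; first by rewrite sum_drift_potential_adj.
case: ifP => [/existsP[a /eqP ->] _ | _]; first by rewrite sum_drift_potential_gap.
by rewrite eqxx.
Qed.

End Circulant.

Theorem mainTheorem5 (N : nat) (hN : (5 <= N)%N) :
  fixprob (@CirN4 N) (@CirN2 N) <= 18%:R / 53%:R.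
Proof.
case: N hN => [|[|[|[|[|n]]]]] // _.
have card_nbr4_gt0 u : (0 < #|nbr (@CirN4 n.+4.+1) u|)%N by rewrite card_nbr_CirN4.
have card_nbr2_gt0 u : (0 < #|nbr (@CirN2 n.+4.+1) u|)%N by rewrite card_nbr_CirN2.
apply: (fixprob_le_superharmonic _ card_nbr4_gt0 card_nbr2_gt0
          (@potential_ge0 n) (potential_setT n)) => [//|S _|v].
  exact: sum_drift_potential_le0.
by rewrite potential_set1.
Qed.
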